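(* For every $n\ge 10$ there exist two graphs $G_n,H_n$, each on $2n$ vertices, and a graph $F$ such that, with $\mathcal{F}=\{F\}$, for every number of rounds $T>0$, $$\big\|\overline{\phi^{(T)}_{\mathsf{WL},\mathcal{F}}}(G_n)-\overline{\phi^{(T)}_{\mathsf{WL},\mathcal{F}}}(H_n)\big\|<\big\|\overline{\phi^{(T)}_{\mathsf{WL}}}(G_n)-\overline{\phi^{(T)}_{\mathsf{WL}}}(H_n)\big\|.$$
   Context: Graphs are finite, simple, undirected, unlabeled. $1$-WL: $C^1_0$ constant, $C^1_t(v)=\mathsf{RELABEL}(C^1_{t-1}(v),\{\!\{C^1_{t-1}(u):u\in N(v)\}\!\})$ with a fixed injective $\mathsf{RELABEL}$ shared by all graphs. $1$-WL$_{\mathcal{F}}$: same update with initial colour $(\ell_F(v))_{F\in\mathcal{F}}$, $\ell_F(v)=1$ if $v$ lies in some vertex set $X$ with induced subgraph $G[X]$ isomorphic to $F$, else $0$. $\phi_t(G)$ (resp. $\phi_{\mathcal{F},t}(G)$) counts the vertices of $G$ of each colour occurring at round $t$ in the graphs considered; $\phi^{(T)}_{\mathsf{WL}}(G)$, $\phi^{(T)}_{\mathsf{WL},\mathcal{F}}(G)$ are concatenations over rounds $0,\dots,T$; the bar denotes normalisation to unit Euclidean norm; $\|\cdot\|$ is the Euclidean norm. *)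

From HB Require Import structures.
From mathcomp Require Import all_boot all_order all_algebra.
From mathcomp Require Import Rstruct.
From Stdlib Require Rdefinitions.
Notation R := Rdefinitions.R.
Set Implicit Arguments. Unset Strict Implicit. Unset Printing Implicit Defensive.
Import Order.TTheory GRing.Theory Num.Theory.

Definition simple_graph (V : finType) (e : rel V) : Prop :=
  symmetric e /\ irreflexive e.

Local Open Scope ring_scope.

(* Colours: finite trees (a countable type), shared by all graphs. *)
Definition colour := GenTree.tree bool.

(* The fixed injective RELABEL: a colour together with the multiset of
   neighbour colours, the multiset encoded canonically as the list sorted
   by the (injective) pickle code. *)
Definition RELABEL (c : colour) (M : seq colour) : colour :=
  GenTree.Node 0 (c :: sort (fun a b : colour => (pickle a <= pickle b)%N) M).

Fixpoint wl (V : finType) (e : rel V) (init : V -> colour) (t : nat) (v : V)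
  : colour :=
  match t with
  | 0 => init v
  | t'.+1 => RELABEL (wl e init t' v) [seq wl e init t' u | u <- enum V & e v u]
  end.

Definition init_const (V : finType) : V -> colour := fun _ => GenTree.Node 1 [::].

(* ell_F(v) = 1 iff v lies in a vertex set X with G[X] isomorphic to F,
   i.e. there is an injective map f from V(F) onto X preserving adjacency
   and non-adjacency (induced), with v in its image. *)
Definition ell (k : nat) (eF : rel 'I_k) (V : finType) (e : rel V) (v : V) : bool :=
  [exists f : {ffun 'I_k -> V},
     [&& injectiveb f, v \in codom f &
         [forall i, forall j, eF i j == e (f i) (f j)]]].

(* Initial colour for 1-WL_F with F = {F}: the tuple (ell_F(v))_{F in F}. *)
Definition init_F (k : nat) (eF : rel 'I_k) (V : finType) (e : rel V) : V -> colour :=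
  fun v => GenTree.Node 1 [:: GenTree.Leaf (ell eF e v)].

Definition colours_at (V W : finType) (eG : rel V) (iG : V -> colour)
  (eH : rel W) (iH : W -> colour) (t : nat) : seq colour :=
  undup ([seq wl eG iG t v | v <- enum V] ++ [seq wl eH iH t w | w <- enum W]).

(* phi^{(T)}(G) and phi^{(T)}(H): concatenation over rounds 0..T of the
   colour-count histograms, indexed by the colours occurring in G or H. *)
Definition feat_pair (V W : finType) (eG : rel V) (iG : V -> colour)
  (eH : rel W) (iH : W -> colour) (T : nat) : seq R * seq R :=
  (flatten [seq [seq (#|[pred v | wl eG iG t v == c]|)%:R : R
                  | c <- colours_at eG iG eH iH t] | t <- iota 0 T.+1],
   flatten [seq [seq (#|[pred w | wl eH iH t w == c]|)%:R : R
                  | c <- colours_at eG iG eH iH t] | t <- iota 0 T.+1]).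

Definition enorm (s : seq R) : R := Num.sqrt (\sum_(x <- s) x ^+ 2).

Definition normdist (p : seq R * seq R) : R :=
  Num.sqrt (\sum_(xy <- zip p.1 p.2)
              (xy.1 / enorm p.1 - xy.2 / enorm p.2) ^+ 2).

From mathcomp Require Import all_boot all_order all_algebra.
From mathcomp Require Import Rstruct ring lra zify.
Import Order.TTheory GRing.Theory Num.Theory.

(* Take G edgeless and H the disjoint union of a triangle, a 4-cycle and
   m = 2n - 7 isolated vertices, with F the triangle.  Every vertex lies in a
   regular component of uniform initial colour, so its 1-WL colour after t
   rounds only depends on its degree and initial colour; the histograms are
   therefore explicit and constant from round 1 on.  Since
   ||a/|a| - b/|b|||^2 = 2 - 2 cos(a, b), the claim is that marking the
   triangle vertices raises the cosine of the two feature vectors, which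
   reduces to a polynomial inequality in m >= 13 and T >= 1. *)

Set Implicit Arguments.
Unset Strict Implicit.
Unset Printing Implicit Defensive.

Definition degree (V : finType) (e : rel V) (v : V) : nat := #|[pred u | e v u]|.

Fixpoint regular_colour (d : nat) (c : colour) (t : nat) : colour :=
  if t is t'.+1 then RELABEL (regular_colour d c t') (nseq d (regular_colour d c t'))
  else c.

Lemma sort_nseq (le : rel colour) d (c : colour) :
  transitive le -> reflexive le -> sort le (nseq d c) = nseq d c.
Proof.
move=> le_trans le_refl; apply: sorted_sort => //.
by elim: d => //= -[|d] //= ->; rewrite le_refl.
Qed.

Lemma regular_colourS d c t :
  regular_colour d c t.+1 =
  GenTree.Node 0 (regular_colour d c t :: nseq d (regular_colour d c t)).
Proof. by rewrite /= /RELABEL sort_nseq // => a b c' /leq_trans; apply. Qed.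

Lemma regular_colourS_inj d d' c c' t :
  regular_colour d c t.+1 = regular_colour d' c' t.+1 ->
  d = d' /\ regular_colour d c t = regular_colour d' c' t.
Proof. by rewrite !regular_colourS => -[-> /(congr1 size)]; rewrite !size_nseq. Qed.

Lemma regular_colourS_neq d d' c c' t :
  d != d' -> regular_colour d c t.+1 != regular_colour d' c' t.+1.
Proof. by move=> /eqP dd'; apply/eqP => /regular_colourS_inj[]. Qed.

Lemma regular_colour_inj d c c' t :
  regular_colour d c t = regular_colour d c' t -> c = c'.
Proof. by elim: t => [|t IH] // /regular_colourS_inj[_ /IH]. Qed.

Lemma wl_locally_regular (V : finType) (e : rel V) (init : V -> colour) :
  (forall v u, e v u -> init u = init v /\ degree e u = degree e v) ->
  forall t v, wl e init t v = regular_colour (degree e v) (init v) t.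
Proof.
move=> homo; elim=> [|t IH] v //=; rewrite IH; congr RELABEL.
have -> : [seq wl e init t u | u <- enum V & e v u] =
          [seq regular_colour (degree e v) (init v) t | u <- enum V & e v u].
  by apply/eq_in_map => u; rewrite mem_filter => /andP[/homo[<- <-] _]; rewrite IH.
set c := regular_colour _ _ t.
have map_const (s : seq V) : [seq c | _ <- s] = nseq (size s) c.
  by elim: s => //= ? ? ->.
by rewrite map_const /degree cardE /enum_mem filter_predT.
Qed.

Lemma card_ord_pred (N : nat) (P : pred nat) :
  #|[pred v : 'I_N | P v]| = count P (iota 0 N).
Proof. by rewrite -val_enum_ord count_map -size_filter cardE /enum_mem filter_predT. Qed.

Definition empty_graph (N : nat) : rel 'I_N := fun _ _ => false.

Definition complete_graph (k : nat) : rel 'I_k := fun i j => i != j.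

(* A triangle on 0, 1, 2 and the 4-cycle 3-4-5-6 (as K_{2,2} between {3, 5}
   and {4, 6}); all other vertices are isolated. *)
Definition tri_square (x y : nat) : bool :=
  [&& x < 3, y < 3 & x != y] || [&& 3 <= x < 7, 3 <= y < 7 & odd (x + y)].

Definition tri_square_graph (N : nat) : rel 'I_N := fun u v => tri_square u v.

Lemma empty_graph_simple N : simple_graph (@empty_graph N).
Proof. by []. Qed.

Lemma complete_graph_simple k : simple_graph (@complete_graph k).
Proof. by split=> [i j|i]; rewrite /complete_graph ?eqxx // eq_sym. Qed.

Lemma tri_square_sym : symmetric tri_square.
Proof.
move=> x y; rewrite /tri_square [y == x]eq_sym [y + x]addnC.
by rewrite andbCA [X in _ || X]andbCA.
Qed.

Lemma tri_square_graph_simple N : simple_graph (@tri_square_graph N).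
Proof.
split=> [u v|u]; first exact: tri_square_sym.
by rewrite /tri_square_graph /tri_square eqxx addnn odd_double !andbF.
Qed.

Lemma tri_square_block x y :
  tri_square x y -> (x < 3) = (y < 3) /\ (x < 7) = (y < 7).
Proof. by case/orP => /and3P[]; lia. Qed.

Lemma tri_square_isolated x y : 7 <= y -> tri_square x y = false.
Proof. by rewrite /tri_square; lia. Qed.

Lemma tri_square_triangle x y z :
  tri_square x y -> tri_square y z -> tri_square z x -> x < 3.
Proof.
have square u v : 3 <= u -> tri_square u v -> (3 <= v) && odd (u + v).
  by move=> u_ge3 /orP[/and3P[]|/and3P[_ /andP[-> _] ->]] //; lia.
case: (ltnP x 3) => // x_ge3 /(square _ _ x_ge3)/andP[y_ge3 odd_xy].
move=> /(square _ _ y_ge3)/andP[z_ge3 odd_yz] /(square _ _ z_ge3)/andP[_ odd_zx].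
(* the 4-cycle is bipartite: x + y, y + z and z + x cannot all be odd *)
have := odd_double (x + y + z).
rewrite -addnn; move: odd_xy odd_yz odd_zx; rewrite !oddD.
by case: (odd x) (odd y) (odd z) => [] [] [].
Qed.

Lemma ell_empty_graph k (eF : rel 'I_k) N (v : 'I_N) i j :
  eF i j -> ell eF (@empty_graph N) v = false.
Proof.
move=> eFij; apply/existsP => -[f /and3P[_ _ /forallP/(_ i)/forallP/(_ j)]].
by rewrite eFij.
Qed.

Lemma ell_tri_square_graph N (v : 'I_N) :
  3 <= N -> ell (@complete_graph 3) (@tri_square_graph N) v = (v < 3).
Proof.
move=> N_ge3; apply/existsP/idP => [[f /and3P[_ /codomP[i ->] /forallP adj]]|v_lt3].
  have edge a b : a != b -> tri_square (f a) (f b).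
    by move=> ab; have /forallP/(_ b)/eqP := adj a; rewrite /complete_graph ab.
  pose o0 := @Ordinal 3 0 isT; pose o1 := @Ordinal 3 1 isT; pose o2 := @Ordinal 3 2 isT.
  case: i => -[|[|[|//]]] i_lt3.
  - by apply: (@tri_square_triangle _ (f o1) (f o2)); apply: edge.
  - by apply: (@tri_square_triangle _ (f o2) (f o0)); apply: edge.
  - by apply: (@tri_square_triangle _ (f o0) (f o1)); apply: edge.
exists [ffun i : 'I_3 => widen_ord N_ge3 i]; apply/and3P; split.
- by apply/injectiveP => i j; rewrite !ffunE => /(congr1 val) /= /val_inj.
- by apply/codomP; exists (Ordinal v_lt3); rewrite ffunE; apply: val_inj.
apply/forallP => i; apply/forallP => j.
rewrite !ffunE /complete_graph /tri_square_graph /tri_square /= !ltn_ord.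
by rewrite -val_eqE /= [3 <= i]leqNgt ltn_ord orbF.
Qed.

Lemma degree_empty_graph N (v : 'I_N) : degree (@empty_graph N) v = 0.
Proof. exact: eq_card0. Qed.

Lemma degree_tri_square_graph N (v : 'I_N) :
  7 <= N -> degree (@tri_square_graph N) v = if v < 7 then 2 else 0.
Proof.
move=> N_ge7; rewrite /degree (@card_ord_pred N (tri_square v)).
move: (val v) => x; rewrite -(subnKC N_ge7) iotaD count_cat add0n.
rewrite [count _ (iota 7 _)](eq_in_count (a2 := pred0)) ?count_pred0 ?addn0.
  case: ltnP => [|x_ge7]; first by move: x; do 7?case=> //.
  rewrite (eq_count (a2 := pred0)) ?count_pred0 // => y.
  by rewrite tri_square_sym tri_square_isolated.
by move=> y; rewrite mem_iota => /andP[y_ge7 _]; apply: tri_square_isolated.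
Qed.

Definition block_colouring (a b c : colour) (x : nat) : colour :=
  if x < 3 then a else if x < 7 then b else c.

Lemma wl_empty_graph N (init : 'I_N -> colour) t (v : 'I_N) :
  wl (@empty_graph N) init t v = regular_colour 0 (init v) t.
Proof. by rewrite wl_locally_regular // degree_empty_graph. Qed.

Lemma wl_tri_square_graph N (init : 'I_N -> colour) a b c t (v : 'I_N) :
  7 <= N -> (forall v, init v = block_colouring a b c v) ->
  wl (@tri_square_graph N) init t v =
  block_colouring (regular_colour 2 a t) (regular_colour 2 b t)
                  (regular_colour 0 c t) v.
Proof.
move=> N_ge7 init_block.
rewrite wl_locally_regular => [|u w /tri_square_block[eq3 eq7]].
  rewrite init_block degree_tri_square_graph // /block_colouring.
  by case: (ltnP v 3) => [v_lt3|_]; [rewrite (ltn_trans v_lt3) | case: ltnP].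
by rewrite !init_block !degree_tri_square_graph // /block_colouring eq3 eq7.
Qed.

Local Open Scope ring_scope.

Definition hist_zip (V W : finType) (eG : rel V) (iG : V -> colour)
    (eH : rel W) (iH : W -> colour) (t : nat) : seq (R * R) :=
  [seq (#|[pred v | wl eG iG t v == c]|%:R, #|[pred w | wl eH iH t w == c]|%:R)
  | c <- colours_at eG iG eH iH t].

Definition feat_zip (V W : finType) (eG : rel V) (iG : V -> colour)
    (eH : rel W) (iH : W -> colour) (T : nat) : seq (R * R) :=
  flatten [seq hist_zip eG iG eH iH t | t <- iota 0 T.+1].

Definition pair_sum (f : R -> R -> R) (s : seq (R * R)) : R :=
  \sum_(xy <- s) f xy.1 xy.2.

Lemma feat_pair_unzip (V W : finType) (eG : rel V) iG (eH : rel W) iH T :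
  feat_pair eG iG eH iH T =
  (unzip1 (feat_zip eG iG eH iH T), unzip2 (feat_zip eG iG eH iH T)).
Proof.
rewrite /feat_pair /feat_zip /unzip1 /unzip2 !map_flatten -!map_comp.
by congr (flatten _, flatten _); apply: eq_map => t /=; rewrite -map_comp.
Qed.

Lemma pair_sum_feat_zip (V W : finType) (eG : rel V) iG (eH : rel W) iH T f :
  pair_sum f (feat_zip eG iG eH iH T) =
  \sum_(t <- iota 0 T.+1) pair_sum f (hist_zip eG iG eH iH t).
Proof. by rewrite /pair_sum big_flatten big_map. Qed.

Lemma sum_iota_const_tail (F : nat -> R) K T :
  (forall t, F t.+1 = K) -> \sum_(t <- iota 0 T.+1) F t = F 0%N + T%:R * K.
Proof.
move=> FK; rewrite -[iota 0 T.+1]/(0%N :: iota (1 + 0) T) big_cons iotaDl big_map.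
rewrite (eq_bigr (fun=> K)) => [|t _]; last exact: FK.
by rewrite -(subn0 T) -/(index_iota 0 T) sumr_const_nat subn0 mulr_natl.
Qed.

Section Cosine.

Local Notation sqnorm1 s := (pair_sum (fun x _ => x ^+ 2) s).
Local Notation sqnorm2 s := (pair_sum (fun _ y => y ^+ 2) s).
Local Notation dot s := (pair_sum *%R s).

Definition cosine (s : seq (R * R)) : R :=
  dot s / (Num.sqrt (sqnorm1 s) * Num.sqrt (sqnorm2 s)).

Lemma sum_sqr_scaled_diff (s : seq (R * R)) (a b : R) :
  \sum_(xy <- s) (xy.1 / a - xy.2 / b) ^+ 2 =
  sqnorm1 s * a^-1 ^+ 2 + sqnorm2 s * b^-1 ^+ 2 - 2 * dot s * a^-1 * b^-1.
Proof.
rewrite /pair_sum; elim: s => [|xy s IH]; first by rewrite !big_nil; ring.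
by rewrite !big_cons IH; ring.
Qed.

Lemma sqr_normdist s : 0 < sqnorm1 s -> 0 < sqnorm2 s ->
  normdist (unzip1 s, unzip2 s) ^+ 2 = 2 - 2 * cosine s.
Proof.
move=> X_gt0 Y_gt0; rewrite /normdist /enorm /unzip1 /unzip2 /= !big_map zip_unzip.
rewrite sqr_sqrtr ?sumr_ge0 // => [|xy _]; last exact: sqr_ge0.
rewrite sum_sqr_scaled_diff !exprVn !sqr_sqrtr ?ltW // !mulfV ?gt_eqF //.
by rewrite /cosine invfM; ring.
Qed.

Lemma normdist_lt_cosine s s' :
  0 < sqnorm1 s -> 0 < sqnorm2 s -> 0 < sqnorm1 s' -> 0 < sqnorm2 s' ->
  cosine s' < cosine s ->
  normdist (unzip1 s, unzip2 s) < normdist (unzip1 s', unzip2 s').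
Proof.
move=> X_gt0 Y_gt0 X'_gt0 Y'_gt0 lt_cos.
by rewrite -(@ltr_pXn2r _ 2) ?nnegrE ?sqrtr_ge0 // !sqr_normdist //; lra.
Qed.

Lemma cosine_lt s s' :
  0 < sqnorm1 s -> 0 < sqnorm2 s -> 0 < sqnorm1 s' -> 0 < sqnorm2 s' ->
  0 <= dot s -> 0 <= dot s' ->
  dot s' ^+ 2 * (sqnorm1 s * sqnorm2 s) < dot s ^+ 2 * (sqnorm1 s' * sqnorm2 s') ->
  cosine s' < cosine s.
Proof.
move=> X_gt0 Y_gt0 X'_gt0 Y'_gt0 Z_ge0 Z'_ge0 lt_cross.
have sqr_cosine t : 0 < sqnorm1 t -> 0 < sqnorm2 t ->
    cosine t ^+ 2 = dot t ^+ 2 / (sqnorm1 t * sqnorm2 t).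
  by move=> ? ?; rewrite /cosine expr_div_n exprMn !sqr_sqrtr ?ltW.
rewrite -(@ltr_pXn2r _ 2) ?nnegrE ?divr_ge0 ?mulr_ge0 ?sqrtr_ge0 //.
by rewrite !sqr_cosine // ltr_pdivrMr ?mulr_gt0 // mulrAC ltr_pdivlMr ?mulr_gt0.
Qed.

End Cosine.

Lemma card_const_colouring (V : finType) (col : V -> colour) c x :
  (forall v, col v = c) -> #|[pred v | col v == x]| = ((c == x) * #|V|)%N.
Proof.
move=> col_c; rewrite mulnC -sum1_card -sum_nat_const -big_mkcond /=.
by apply: eq_bigl => v; rewrite inE col_c.
Qed.

Section TriSquareHistograms.

Variable M : nat.
Local Notation N := (7 + M)%N.

Let N_ge7 : (7 <= N)%N := leq_addr M 7.

Lemma card_block_colouring a b c x :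
  #|[pred v : 'I_N | block_colouring a b c v == x]| =
  ((a == x) * 3 + (b == x) * 4 + (c == x) * M)%N.
Proof.
rewrite (@card_ord_pred N (fun v => block_colouring a b c v == x)) iotaD count_cat.
rewrite [count _ (iota 7 M)](eq_in_count (a2 := fun=> c == x)); last first.
  move=> y; rewrite mem_iota /block_colouring => /andP[y_ge7 _].
  by rewrite ltnNge (leq_trans _ y_ge7) // ltnNge y_ge7.
rewrite /=; case: (a == x) (b == x) (c == x) => [] [] [];
  by rewrite ?count_predT ?count_pred0 ?size_iota ?mul1n ?mul0n ?addn0.
Qed.

Definition block_sum (a b c : colour) (f : R -> R -> R) : R :=
  \sum_(x <- undup [:: c; a; b])
    f ((c == x)%:R * N%:R) ((a == x)%:R * 3 + (b == x)%:R * 4 + (c == x)%:R * M%:R).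

Lemma block_sum_const a f : block_sum a a a f = f N%:R N%:R.
Proof. by rewrite /block_sum /= !inE eqxx big_seq1 eqxx /= natrD; congr f; ring. Qed.

Lemma block_sum_square a c f :
  a != c -> block_sum a a c f = f N%:R M%:R + f 0 7.
Proof.
move=> /negbTE ac; rewrite /block_sum /= !inE eq_sym ac eqxx /=.
by rewrite big_cons big_seq1 !eqxx ac eq_sym ac /=; congr (f _ _ + f _ _); ring.
Qed.

Lemma block_sum_triangle a c f :
  a != c -> block_sum a c c f = f 0 3 + f N%:R (M%:R + 4).
Proof.
move=> /negbTE ac; rewrite /block_sum /= !inE eq_sym ac eqxx /=.
rewrite big_cons big_seq1 !eqxx ac eq_sym ac /=.
by congr (f _ _ + f _ _); rewrite ?natrD; ring.
Qed.

Lemma block_sum_distinct a b c f :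
  a != b -> a != c -> b != c ->
  block_sum a b c f = f N%:R M%:R + f 0 3 + f 0 4.
Proof.
move=> /negbTE ab /negbTE ac /negbTE bc.
rewrite /block_sum /= !inE [c == a]eq_sym [c == b]eq_sym ab ac bc /=.
rewrite !big_cons big_nil addr0 !eqxx [b == a]eq_sym [c == a]eq_sym [c == b]eq_sym.
by rewrite ab ac bc addrA /=; congr (f _ _ + f _ _ + f _ _); ring.
Qed.

Lemma pair_sum_hist_block (eG eH : rel 'I_N) iG iH t a b c f :
  (forall v, wl eG iG t v = c) ->
  (forall v, wl eH iH t v = block_colouring a b c v) ->
  pair_sum f (hist_zip eG iG eH iH t) = block_sum a b c f.
Proof.
move=> wlG wlH; rewrite /pair_sum /hist_zip big_map /colours_at.
rewrite (perm_big (undup [:: c; a; b])); last first.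
  apply: uniq_perm; rewrite ?undup_uniq // => x; rewrite !mem_undup mem_cat !inE.
  apply/orP/idP => [[]/mapP[v _ ->]|]; rewrite ?wlG ?wlH ?eqxx //.
    by rewrite /block_colouring; do 2?case: ifP => _; rewrite eqxx ?orbT.
  case/or3P => /eqP ->.
  - by left; apply/mapP; exists (@Ordinal N 0 isT); rewrite ?mem_enum ?wlG.
  - by right; apply/mapP; exists (@Ordinal N 0 isT); rewrite ?mem_enum ?wlH.
  - by right; apply/mapP; exists (@Ordinal N 3 isT); rewrite ?mem_enum ?wlH.
apply: eq_big_seq => x _; rewrite (card_const_colouring _ wlG) card_ord.
rewrite (eq_card (B := [pred v : 'I_N | block_colouring a b c v == x])).
  by rewrite card_block_colouring !natrM; congr f; rewrite /= !natrD !natrM.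
by move=> v; rewrite !inE wlH.
Qed.

Lemma pair_sum_hist_wl t f :
  pair_sum f (hist_zip (@empty_graph N) (@init_const _)
                       (@tri_square_graph N) (@init_const _) t) =
  if t is 0 then f N%:R N%:R else f N%:R M%:R + f 0 7.
Proof.
pose c0 : colour := GenTree.Node 1 [::].
rewrite (@pair_sum_hist_block _ _ _ _ t (regular_colour 2 c0 t) (regular_colour 2 c0 t)
           (regular_colour 0 c0 t)); last 2 first.
- by move=> v; rewrite wl_empty_graph.
- by move=> v; apply: wl_tri_square_graph => // w; rewrite /block_colouring !if_same.
case: t => [|t]; first exact: block_sum_const.
exact/block_sum_square/regular_colourS_neq.
Qed.

Lemma pair_sum_hist_wl_triangle t f :
  pair_sum f (hist_zip
    (@empty_graph N) (init_F (@complete_graph 3) (@empty_graph N))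
    (@tri_square_graph N) (init_F (@complete_graph 3) (@tri_square_graph N)) t) =
  if t is 0 then f 0 3 + f N%:R (M%:R + 4) else f N%:R M%:R + f 0 3 + f 0 4.
Proof.
pose no : colour := GenTree.Node 1 [:: GenTree.Leaf false].
pose yes : colour := GenTree.Node 1 [:: GenTree.Leaf true].
rewrite (@pair_sum_hist_block _ _ _ _ t (regular_colour 2 yes t) (regular_colour 2 no t)
           (regular_colour 0 no t)); last 2 first.
- move=> v; rewrite wl_empty_graph /init_F.
  by rewrite (@ell_empty_graph _ _ _ _ (@Ordinal 3 0 isT) (@Ordinal 3 1 isT)).
- move=> v; apply: wl_tri_square_graph => // w.
  rewrite /init_F ell_tri_square_graph ?(leq_trans _ N_ge7) // /block_colouring.
  by case: ifP; rewrite ?if_same.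
case: t => [|t]; first exact: block_sum_triangle.
by apply: block_sum_distinct;
  [apply/eqP => /regular_colour_inj | exact: regular_colourS_neq..].
Qed.

Lemma pair_sum_feat_wl T f :
  pair_sum f (feat_zip (@empty_graph N) (@init_const _)
                       (@tri_square_graph N) (@init_const _) T) =
  f N%:R N%:R + T%:R * (f N%:R M%:R + f 0 7).
Proof.
rewrite pair_sum_feat_zip (sum_iota_const_tail _ (fun t => pair_sum_hist_wl t.+1 f)).
by rewrite pair_sum_hist_wl.
Qed.

Lemma pair_sum_feat_wl_triangle T f :
  pair_sum f (feat_zip
    (@empty_graph N) (init_F (@complete_graph 3) (@empty_graph N))
    (@tri_square_graph N) (init_F (@complete_graph 3) (@tri_square_graph N)) T) =
  f 0 3 + f N%:R (M%:R + 4) + T%:R * (f N%:R M%:R + f 0 3 + f 0 4).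
Proof.
rewrite pair_sum_feat_zip.
rewrite (sum_iota_const_tail _ (fun t => pair_sum_hist_wl_triangle t.+1 f)).
by rewrite pair_sum_hist_wl_triangle.
Qed.

End TriSquareHistograms.

Lemma polynomial_cross_ineq (m t : R) : 13 <= m -> 1 <= t ->
  (m + 7 + t * m) ^+ 2 * ((m + 4) ^+ 2 + 9 + t * (m ^+ 2 + 25))
  < (m + 4 + t * m) ^+ 2 * ((m + 7) ^+ 2 + t * (m ^+ 2 + 49)).
Proof. by move=> m_ge13 t_ge1; nra. Qed.

Theorem proposition14 :
  forall n : nat, (10 <= n)%N ->
  exists (eG eH : rel 'I_(2 * n)) (k : nat) (eF : rel 'I_k),
    [/\ simple_graph eG, simple_graph eH, simple_graph eF &
      forall T : nat, (0 < T)%N ->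
        normdist (feat_pair eG (init_F eF eG) eH (init_F eF eH) T)
        < normdist (feat_pair eG (@init_const _) eH (@init_const _) T)].
Proof.
move=> n n_ge10.
have [M M_ge13 ->] : exists2 M, (13 <= M)%N & (2 * n = 7 + M)%N.
  by exists (2 * n - 7)%N; lia.
exists (@empty_graph _), (@tri_square_graph _), 3%N, (@complete_graph 3).
split; [exact: empty_graph_simple | exact: tri_square_graph_simple |
        exact: complete_graph_simple |].
move=> T T_gt0; rewrite !feat_pair_unzip.
have m_ge13 : 13 <= M%:R :> R by rewrite (ler_nat R 13).
have t_ge1 : 1 <= T%:R :> R by rewrite ler1n.
apply: normdist_lt_cosine; last apply: cosine_lt;
  rewrite ?pair_sum_feat_wl ?pair_sum_feat_wl_triangle ?natrD;
  move: (M%:R) (T%:R) m_ge13 t_ge1 => m t m_ge13 t_ge1.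
all: try nra.
(* G contributes m + 7 in every round and both dot products carry a factor
   m + 7, so cancelling this common positive factor leaves the key inequality. *)
have scale_gt0 : 0 < (m + 7) ^+ 2 * ((1 + t) * (m + 7) ^+ 2).
  by rewrite !mulr_gt0 ?exprn_gt0 //; lra.
by have := polynomial_cross_ineq m_ge13 t_ge1; nra.
Qed.
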